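(* Let $\mathcal{C}$ be a simplicial complex on $[n]$ and $p\ge1$. Then $\mathcal{C}$ is unimodular if and only if $G^p(\mathcal{C})$ is unimodular.
   Context: A simplicial complex on $[n]$ is a family of subsets of $[n]$ closed under subsets; facets are inclusion-maximal faces. $G^p(\mathcal{C})$ denotes the same family of faces as $\mathcal{C}$ but regarded as a complex on ground set $[n+p]$ (so $n+1,\dots,n+p$ lie in no face). $\mathcal{A}_{\mathcal{C}}$ is the $0/1$ matrix with columns indexed by $\mathbf{i}\in\{1,2\}^{\text{ground set}}$ and rows indexed by pairs $(F,\mathbf{e})$, $F$ a facet, $\mathbf{e}\in\{1,2\}^F$; entry $1$ iff $\mathbf{e}=\mathbf{i}|_F$. An integer matrix is unimodular if every circuit (nonzero integer kernel vector with coprime entries and inclusion-minimal support) has entries in $\{0,\pm1\}$; a complex is unimodular if its matrix $\mathcal{A}$ is. *)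

From mathcomp Require Import all_boot all_order all_algebra.
Set Implicit Arguments. Unset Strict Implicit. Unset Printing Implicit Defensive.
Import GRing.Theory Num.Theory.
Local Open Scope ring_scope.

Definition simplicial (n : nat) (C : {set {set 'I_n}}) : Prop :=
  forall F G : {set 'I_n}, F \in C -> G \subset F -> G \in C.

Definition facet (n : nat) (C : {set {set 'I_n}}) (F : {set 'I_n}) : bool :=
  (F \in C) && [forall G : {set 'I_n}, (G \in C) ==> (F \subset G) ==> (G == F)].

Definition Gp (n p : nat) (C : {set {set 'I_n}}) : {set {set 'I_(n + p)}} :=
  [set (fun F : {set 'I_n} => [set widen_ord (leq_addr p n) x | x in F]) F | F in C].

Definition in_kernel (Rw Cl : finType) (rowP : pred Rw) (A : Rw -> Cl -> int)
  (u : Cl -> int) : Prop :=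
  forall r, rowP r -> \sum_(c : Cl) A r c * u c = 0.

Definition support (Cl : finType) (u : Cl -> int) : {set Cl} := [set c | u c != 0].

Definition circuit (Rw Cl : finType) (rowP : pred Rw) (A : Rw -> Cl -> int)
  (u : Cl -> int) : Prop :=
  [/\ in_kernel rowP A u,
      support u != set0,
      (\big[gcdn/0%N]_(c : Cl) `|u c|%N = 1%N) &
      forall v : Cl -> int, in_kernel rowP A v -> support v != set0 ->
        ~ (support v \proper support u)].

Definition unimodular_mx (Rw Cl : finType) (rowP : pred Rw) (A : Rw -> Cl -> int) : Prop :=
  forall u : Cl -> int, circuit rowP A u -> forall c, u c \in [:: 0; 1; -1].

(* The two-element set {1,2} is encoded as bool.
   Columns: i in {1,2}^[n], i.e. {ffun 'I_n -> bool}.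
   Rows: pairs (F, e) with F a facet and e in {1,2}^F, encoded as a function
   'I_n -> bool which is false outside F. *)
Definition AC_row (n : nat) (C : {set {set 'I_n}})
  : pred ({set 'I_n} * {ffun 'I_n -> bool}) :=
  fun r => facet C r.1 && [forall x, (x \notin r.1) ==> ~~ r.2 x].

Definition AC (n : nat) (r : {set 'I_n} * {ffun 'I_n -> bool})
  (i : {ffun 'I_n -> bool}) : int :=
  if [forall x in r.1, i x == r.2 x] then 1 else 0.

Definition unimodular_complex (n : nat) (C : {set {set 'I_n}}) : Prop :=
  unimodular_mx (AC_row C) (@AC n).

From Pilot Require Import Defs.
From mathcomp Require Import all_boot all_order all_algebra.
Set Implicit Arguments. Unset Strict Implicit. Unset Printing Implicit Defensive.
Import GRing.Theory Num.Theory.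
Local Open Scope ring_scope.

(* The matrix of G^p(C) is the matrix of C with every column repeated 2^p
   times: columns i, i' with the same restriction to [n] are equal, and the
   rows of the two matrices correspond.  Repeating columns preserves
   unimodularity.  A circuit that uses two copies of one column c is
   +-(e_c - e_c'), and a circuit using at most one copy of each column is,
   after merging the copies, a circuit of the original matrix; conversely a
   circuit of the original matrix placed on one copy of each column is a
   circuit of the repeated one. *)

Section Circuits.
Variables (Rw Cl : finType) (rP : pred Rw) (A : Rw -> Cl -> int).

Lemma support_eq (u v : Cl -> int) : u =1 v -> Defs.support u = Defs.support v.
Proof. by move=> uv; apply/setP => c; rewrite !inE uv. Qed.

Lemma in_kernel_eq (u v : Cl -> int) : u =1 v -> in_kernel rP A u -> in_kernel rP A v.
Proof. by move=> uv Ku r rr; rewrite -[RHS](Ku r rr); apply: eq_bigr => c _; rewrite uv. Qed.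

Lemma circuit_eq (u v : Cl -> int) : u =1 v -> circuit rP A u -> circuit rP A v.
Proof.
move=> uv [Ku u0 gcd_u min_u]; rewrite /circuit -(support_eq uv); split => //.
- exact: in_kernel_eq Ku.
- by rewrite -gcd_u; apply: eq_bigr => c _; rewrite uv.
Qed.

Lemma in_kernel_subr (u v : Cl -> int) (k : int) :
  in_kernel rP A u -> in_kernel rP A v -> in_kernel rP A (fun c => u c - k * v c).
Proof.
move=> Ku Kv r rr; under eq_bigr => c _ do rewrite mulrBr mulrCA.
by rewrite sumrB -mulr_sumr Ku ?Kv ?mulr0 ?subr0.
Qed.

Lemma circuit_support_min (u v : Cl -> int) : circuit rP A u -> in_kernel rP A v ->
  Defs.support v != set0 -> Defs.support v \subset Defs.support u ->
  Defs.support v = Defs.support u.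
Proof. by case=> _ _ _ min_u Kv v0 /eqVproper [// | /(min_u v Kv v0)]. Qed.

Section RepeatedColumn.
Variables (c1 c2 : Cl).
Hypothesis c1_neq_c2 : c1 != c2.
Hypothesis col_eq : forall r, rP r -> A r c1 = A r c2.

Let delta12 (c : Cl) : int := (c == c1)%:R - (c == c2)%:R.

Lemma in_kernel_delta12 : in_kernel rP A delta12.
Proof.
move=> r rr; rewrite (bigD1 c1) // (bigD1 c2) /=; last by rewrite eq_sym.
rewrite /delta12 big1 => [|c /andP [/negbTE-> /negbTE->]]; last by rewrite subrr mulr0.
rewrite !eqxx (negbTE c1_neq_c2) eq_sym (negbTE c1_neq_c2).
by rewrite col_eq // subr0 sub0r mulr1 mulrN1 addr0 subrr.
Qed.

Lemma support_delta12 : Defs.support delta12 = [set c1; c2].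
Proof.
apply/setP => c; rewrite !inE /delta12.
case: (eqVneq c c1) => [->|_]; first by rewrite (negbTE c1_neq_c2).
by case: (eqVneq c c2).
Qed.

(* Comparing u with u - u c1 * (e_c1 - e_c2), whose support is at most {c2}. *)
Lemma circuit_repeated_column_opp (u : Cl -> int) :
  circuit rP A u -> u c1 != 0 -> u c2 != 0 ->
  Defs.support u = [set c1; c2] /\ u c2 = - u c1.
Proof.
move=> cu u1 u2; have [Ku _ _ _] := cu.
have supp_u : Defs.support u = [set c1; c2].
  rewrite -support_delta12; apply/esym/(circuit_support_min cu in_kernel_delta12).
    by rewrite support_delta12; apply/set0Pn; exists c1; rewrite !inE eqxx.
  by rewrite support_delta12; apply/subsetP => c; rewrite !inE => /orP [] /eqP->.
split=> //; apply/eqP; rewrite -addr_eq0 addrC; apply: contraT => sum_u.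
pose v c := u c - u c1 * delta12 c.
have supp_v : Defs.support v = [set c2].
  apply/setP => c; rewrite !inE /v /delta12.
  case: (eqVneq c c1) => [->|nc1] /=.
    by rewrite (negbTE c1_neq_c2) subr0 mulr1 subrr eqxx.
  case: (eqVneq c c2) => [->|nc2] /=; first by rewrite sub0r mulrN1 opprK addrC.
  rewrite subrr mulr0 subr0.
  by move/setP/(_ c): supp_u; rewrite !inE (negbTE nc1) (negbTE nc2).
have v0 : [set c2] != set0 by apply/set0Pn; exists c2; rewrite inE.
have sub_v : [set c2] \subset [set c1; c2] by rewrite sub1set !inE eqxx orbT.
have := circuit_support_min cu (in_kernel_subr (u c1) Ku in_kernel_delta12).
rewrite -/v supp_v supp_u => /(_ v0 sub_v) /setP/(_ c1).
by rewrite !inE eqxx (negbTE c1_neq_c2).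
Qed.

Lemma circuit_repeated_column (u : Cl -> int) :
  circuit rP A u -> u c1 != 0 -> u c2 != 0 -> forall c, u c \in [:: 0; 1; -1].
Proof.
move=> cu u1 u2; have [_ _ gcd_u _] := cu.
have [supp_u u2E] := circuit_repeated_column_opp cu u1 u2.
have u_off c : c != c1 -> c != c2 -> u c = 0.
  move=> nc1 nc2; apply/eqP; apply: contraT => uc.
  by move/setP/(_ c): supp_u; rewrite !inE uc (negbTE nc1) (negbTE nc2).
have abs_u1 : `|u c1|%N = 1%N.
  apply/eqP; rewrite -dvdn1 -gcd_u; apply/dvdn_biggcdP => c _.
  case: (eqVneq c c1) => [-> //|nc1]; case: (eqVneq c c2) => [->|nc2].
    by rewrite u2E abszN.
  by rewrite (u_off c) ?dvdn0.
have unit_u1 : u c1 \in [:: 0; 1; -1] by case: (u c1) abs_u1 => [[|[|]]|[|]].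
move=> c; case: (eqVneq c c1) => [-> //|nc1]; case: (eqVneq c c2) => [->|nc2].
  by move: unit_u1; rewrite u2E !inE oppr_eq0 !eqr_oppLR opprK => /or3P [] ->; rewrite ?orbT.
by rewrite (u_off c) ?inE ?eqxx.
Qed.

End RepeatedColumn.
End Circuits.

Lemma eq_biggcd_abs (T T' : finType) (u : T -> int) (w : T' -> int) :
  (forall c, u c != 0 -> exists j, w j = u c) ->
  (forall j, w j != 0 -> exists c, u c = w j) ->
  \big[gcdn/0%N]_c `|u c|%N = \big[gcdn/0%N]_j `|w j|%N.
Proof.
have dvd (X Y : finType) (x : X -> int) (y : Y -> int) :
    (forall j, y j != 0 -> exists c, x c = y j) ->
    (\big[gcdn/0%N]_c `|x c| %| \big[gcdn/0%N]_j `|y j|)%N.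
  move=> xy; apply/dvdn_biggcdP => j _; case: (eqVneq (y j) 0) => [-> //|/xy [c <-]].
  exact: biggcdn_inf.
by move=> uw wu; apply/eqP; rewrite eqn_dvd !dvd.
Qed.

Section Pushforward.
Variables (Cl Cl' : finType) (pi : Cl' -> Cl).

Definition push (v : Cl' -> int) (j : Cl) : int := \sum_(c | pi c == j) v c.

Lemma sum_push (F : Cl -> int) (v : Cl' -> int) :
  \sum_c F (pi c) * v c = \sum_j F j * push v j.
Proof.
rewrite (partition_big pi xpredT) //=; apply: eq_bigr => j _.
by rewrite mulr_sumr; apply: eq_bigr => c /eqP->.
Qed.

Lemma push_eq0 (v : Cl' -> int) j : j \notin pi @: Defs.support v -> push v j = 0.
Proof.
move=> nj; apply: big1 => c /eqP pc_j; apply/eqP; apply: contraNT nj => vc.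
by rewrite -pc_j imset_f // inE.
Qed.

Variable S : {set Cl'}.
Hypothesis pi_inj : {in S &, injective pi}.

Lemma push_in (v : Cl' -> int) c :
  Defs.support v \subset S -> c \in S -> push v (pi c) = v c.
Proof.
move=> vS cS; rewrite /push (bigD1 c) //= big1 ?addr0 // => c' /andP [/eqP pc' c'c].
apply/eqP; apply: contraNT c'c => vc'.
by rewrite (pi_inj _ cS pc') // (subsetP vS) // inE.
Qed.

Lemma support_push (v : Cl' -> int) :
  Defs.support v \subset S -> Defs.support (push v) = pi @: Defs.support v.
Proof.
move=> vS; apply/setP => j; rewrite inE; apply/idP/idP.
  by apply: contraLR => /push_eq0->.
case/imsetP => c vc ->; rewrite push_in ?(subsetP vS) //.
by rewrite inE in vc.
Qed.

Definition lift (w : Cl -> int) (c : Cl') : int := if c \in S then w (pi c) else 0.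

Lemma support_lift (w : Cl -> int) : Defs.support (lift w) \subset S.
Proof. by apply/subsetP => c; rewrite inE /lift; case: ifP; rewrite ?eqxx. Qed.

Lemma push_liftK (w : Cl -> int) : Defs.support w \subset pi @: S -> push (lift w) =1 w.
Proof.
move=> wS j; case: (boolP (j \in pi @: S)) => [/imsetP [c cS ->]|nj].
  by rewrite push_in ?support_lift // /lift cS.
rewrite push_eq0; last by apply: contra nj; apply/subsetP/imsetS/support_lift.
by apply/esym/eqP; apply: contraNT nj => wj; rewrite (subsetP wS) // inE.
Qed.

End Pushforward.

Section RepeatedColumns.
Variables (Rw Rw' Cl Cl' : finType) (rP : pred Rw) (A : Rw -> Cl -> int)
  (rP' : pred Rw') (B : Rw' -> Cl' -> int) (pi : Cl' -> Cl).
Hypothesis rowsAB : forall r, rP r -> exists2 r', rP' r' & forall c, B r' c = A r (pi c).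
Hypothesis rowsBA : forall r', rP' r' -> exists2 r, rP r & forall c, B r' c = A r (pi c).

Lemma in_kernel_push (v : Cl' -> int) : in_kernel rP' B v <-> in_kernel rP A (push pi v).
Proof.
split=> Kv => [r /rowsAB [r' r'P Br'] | r' /rowsBA [r rP_r Br']].
  by rewrite -[RHS](Kv r' r'P) -sum_push; apply: eq_bigr => c _; rewrite Br'.
by rewrite -[RHS](Kv r rP_r) -sum_push; apply: eq_bigr => c _; rewrite Br'.
Qed.

Lemma circuit_push (u : Cl' -> int) : {in Defs.support u &, injective pi} ->
  circuit rP' B u <-> circuit rP A (push pi u).
Proof.
set S := Defs.support u => pi_inj.
have supp_pu : Defs.support (push pi u) = pi @: S by rewrite (support_push pi_inj).
have pu c : c \in S -> push pi u (pi c) = u c := push_in pi_inj (subxx S).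
have gcd_pu : \big[gcdn/0%N]_c `|u c|%N = \big[gcdn/0%N]_j `|push pi u j|%N.
  apply: eq_biggcd_abs => [c uc|j].
    by exists (pi c); rewrite pu // inE.
  move=> pj; have : j \in pi @: S by rewrite -supp_pu inE.
  by case/imsetP => c cS ->; exists c; rewrite pu.
rewrite /circuit supp_pu imset_eq0 gcd_pu.
split=> -[/in_kernel_push Ku u0 g1 min_u]; split=> // v Kv v0 vS.
- have pvK := push_liftK pi_inj (proper_sub vS).
  have supp_v : Defs.support v = pi @: Defs.support (lift pi S v).
    by rewrite -(support_eq pvK) (support_push pi_inj) ?support_lift.
  apply: (min_u (lift pi S v)).
  + by apply/in_kernel_push/(in_kernel_eq (fun c => esym (pvK c))).
  + by move: v0; rewrite supp_v imset_eq0.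
  + rewrite properEneq support_lift andbT; apply: contraTneq vS => liftS.
    by rewrite supp_v liftS proper_irrefl.
- have vS_sub := proper_sub vS.
  apply: (min_u (push pi v)); first exact/in_kernel_push.
    by rewrite (support_push pi_inj) // imset_eq0.
  rewrite (support_push pi_inj) // properEcard imsetS ?proper_sub //=.
  rewrite !card_in_imset //; first by move: vS; rewrite properEcard => /andP [].
  by apply: sub_in2 pi_inj; apply/subsetP.
Qed.

Lemma unimodular_mx_repeat : unimodular_mx rP A -> unimodular_mx rP' B.
Proof.
move=> UA u cu c.
have [inj|] := boolP [forall c1, forall c2,
  [&& u c1 != 0, u c2 != 0 & pi c1 == pi c2] ==> (c1 == c2)].
  have pi_inj : {in Defs.support u &, injective pi}.
    move=> c1 c2; rewrite !inE => u1 u2 e; apply/eqP.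
    by apply: (implyP (forallP (forallP inj c1) c2)); rewrite u1 u2 e eqxx.
  case: (eqVneq (u c) 0) => [->|uc]; first by rewrite inE eqxx.
  rewrite -(push_in pi_inj (subxx _)); last by rewrite inE.
  by apply: UA; apply/circuit_push.
rewrite negb_forall => /existsP [c1]; rewrite negb_forall => /existsP [c2].
rewrite negb_imply => /andP [/and3P [u1 u2 /eqP e12] n12].
apply: (circuit_repeated_column n12 _ cu u1 u2) => r' /rowsBA [r _ Br'].
by rewrite !Br' e12.
Qed.

Lemma unimodular_mx_unrepeat (sg : Cl -> Cl') :
  cancel sg pi -> unimodular_mx rP' B -> unimodular_mx rP A.
Proof.
move=> sgK UB u cu j.
set S := sg @: Defs.support u.
have pi_inj : {in S &, injective pi}.
  by move=> _ _ /imsetP [j1 _ ->] /imsetP [j2 _ ->]; rewrite !sgK => ->.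
have supp_lift : Defs.support (lift pi S u) = S.
  apply/eqP; rewrite eqEsubset support_lift; apply/subsetP => _ /imsetP [j' uj' ->].
  by rewrite inE /lift imset_f // sgK; rewrite inE in uj'.
have pu : push pi (lift pi S u) =1 u.
  apply: push_liftK => //; apply/subsetP => j' uj'.
  by apply/imsetP; exists (sg j'); rewrite ?sgK // imset_f.
have clu : circuit rP' B (lift pi S u).
  apply/circuit_push; first by rewrite supp_lift.
  exact: circuit_eq (fun j => esym (pu j)) cu.
case: (eqVneq (u j) 0) => [->|uj]; first by rewrite inE eqxx.
by have := UB _ clu (sg j); rewrite /lift imset_f ?inE // sgK.
Qed.

End RepeatedColumns.

Section GhostVertices.
Variables (n p : nat) (C : {set {set 'I_n}}).

Local Notation widen := (widen_ord (leq_addr p n)).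

Definition widen_face (F : {set 'I_n}) : {set 'I_(n + p)} := [set widen x | x in F].

Definition restrict_col (i : {ffun 'I_(n + p) -> bool}) : {ffun 'I_n -> bool} :=
  [ffun x => i (widen x)].

(* Extending by [false] keeps a row label [e] zero off its facet, as [AC_row] requires. *)
Definition extend_col (j : {ffun 'I_n -> bool}) : {ffun 'I_(n + p) -> bool} :=
  [ffun y => if split y is inl x then j x else false].

Lemma lshift_widen x : lshift p x = widen x.
Proof. exact: val_inj. Qed.

Lemma widen_inj : injective widen.
Proof. by move=> x y; rewrite -!lshift_widen => /lshift_inj. Qed.

Lemma mem_widen_face x F : (widen x \in widen_face F) = (x \in F).
Proof. exact: mem_imset widen_inj. Qed.

Lemma widen_face_inj : injective widen_face.
Proof. exact: imset_inj widen_inj. Qed.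

Lemma widen_face_subset F G : (widen_face F \subset widen_face G) = (F \subset G).
Proof.
apply/idP/idP => [/subsetP FG|]; last exact: imsetS.
by apply/subsetP => x; rewrite -!mem_widen_face => /FG.
Qed.

Lemma mem_Gp F : (widen_face F \in Gp p C) = (F \in C).
Proof. exact: mem_imset widen_face_inj. Qed.

Lemma extend_colK : cancel extend_col restrict_col.
Proof.
move=> j; apply/ffunP => x; rewrite !ffunE.
by rewrite -lshift_widen (unsplitK (inl _ x)).
Qed.

Lemma facet_Gp F : facet (Gp p C) (widen_face F) = facet C F.
Proof.
rewrite /facet mem_Gp; congr (_ && _); apply/forallP/forallP => maxF G.
  by have := maxF (widen_face G); rewrite mem_Gp widen_face_subset (inj_eq widen_face_inj).
apply/implyP => /imsetP [G' CG' ->]; rewrite widen_face_subset (inj_eq widen_face_inj).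
exact: (implyP (maxF G')).
Qed.

Lemma facet_GpP F' : facet (Gp p C) F' -> exists2 F, F' = widen_face F & facet C F.
Proof.
move=> fF'; case/andP: (fF') => /imsetP [F _ eF'] _.
by exists F => //; rewrite -facet_Gp /widen_face -eF'.
Qed.

Lemma AC_widen F e i :
  Defs.AC (widen_face F, e) i = Defs.AC (F, restrict_col e) (restrict_col i).
Proof.
rewrite /Defs.AC /=; congr (if _ then _ else _); apply/forall_inP/forall_inP => eq_ie x.
  by rewrite !ffunE => Fx; apply: eq_ie; rewrite mem_widen_face.
by case/imsetP => y Fy ->; have := eq_ie y Fy; rewrite !ffunE.
Qed.

Lemma AC_rows_to_Gp r : AC_row C r ->
  exists2 r', AC_row (Gp p C) r' & forall i, Defs.AC r' i = Defs.AC r (restrict_col i).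
Proof.
case: r => F e /andP [/= fF /forall_inP e_off].
exists (widen_face F, extend_col e); last by move=> i; rewrite AC_widen extend_colK.
rewrite /AC_row /= facet_Gp fF; apply/forall_inP => y Fy; rewrite ffunE.
case: split_ordP => // x yE; apply: e_off; apply: contra Fy => Fx.
by rewrite yE lshift_widen mem_widen_face.
Qed.

Lemma AC_rows_from_Gp r' : AC_row (Gp p C) r' ->
  exists2 r, AC_row C r & forall i, Defs.AC r' i = Defs.AC r (restrict_col i).
Proof.
case: r' => F' e /andP [/= /facet_GpP [F -> fF] /forall_inP e_off].
exists (F, restrict_col e); last by move=> i; rewrite AC_widen.
rewrite /AC_row /= fF; apply/forall_inP => x Fx; rewrite ffunE.
by apply: e_off; rewrite mem_widen_face.
Qed.

End GhostVertices.

Theorem proposition3p17 (n p : nat) (C : {set {set 'I_n}}) :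
  simplicial C -> (1 <= p)%N ->
  (unimodular_complex C <-> unimodular_complex (Gp p C)).
Proof.
move=> _ _; have to_Gp := @AC_rows_to_Gp n p C; have from_Gp := @AC_rows_from_Gp n p C.
split; first exact: unimodular_mx_repeat to_Gp from_Gp.
exact: (unimodular_mx_unrepeat to_Gp from_Gp (@extend_colK n p)).
Qed.
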